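(* Let $H\in\mathbb{R}^{n\times d}$ have rank $h$, $\Sigma\in\mathbb{R}^{n\times n}$ symmetric positive definite, $\Gamma_0$ the empirical covariance of an initial ensemble, $G_0=\Gamma_0$, $\widetilde{\mathbb{M}}_i=(I+G_iH^\top\Sigma^{-1}H)^{-1}$, $G_{i+1}=\widetilde{\mathbb{M}}_iG_i$. With $\widetilde{\mathbb{P}},\widetilde{\mathbb{Q}},\widetilde{\mathbb{N}}$ as in the context, for every $i\ge0$ these are spectral projectors of $\widetilde{\mathbb{M}}_i$: each commutes with $\widetilde{\mathbb{M}}_i$ and is idempotent, their pairwise products are zero, and $\widetilde{\mathbb{P}}+\widetilde{\mathbb{Q}}+\widetilde{\mathbb{N}}=I$.
   Context: $H^+=(H^\top\Sigma^{-1}H)^\dagger H^\top\Sigma^{-1}$. $\Gamma_0=\frac1{J-1}\sum_j(v_0^{(j)}-\bar v_0)(v_0^{(j)}-\bar v_0)^\top$. Let $C_i=HG_iH^\top$, $r$ the number of positive eigenvalues of $(C_0,\Sigma)$, and $\tilde w_1,\dots,\tilde w_n$ a basis of $\mathbb{R}^n$ with $\tilde w_k^\top\Sigma\tilde w_l$ equal to $1$ if $k=l$, $0$ otherwise, each a generalized eigenvector of $(C_i,\Sigma)$ for every $i$ with eigenvalue $\tilde\delta_{\ell,i}$, where $\tilde w_1,\dots,\tilde w_r\in\mathsf{Ran}(\Sigma^{-1}H)$ have positive eigenvalues, $\tilde w_{r+1},\dots,\tilde w_h\in\mathsf{Ran}(\Sigma^{-1}H)$ eigenvalue zero, $\tilde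 w_{h+1},\dots,\tilde w_n\in\mathsf{Ker}(H^\top)$. Let $\tilde u_\ell=\frac1{\tilde\delta_{\ell,0}}G_0H^\top\tilde w_\ell$ ($\ell\le r$), $\tilde u_\ell=H^+\Sigma\tilde w_\ell$ ($r<\ell\le h$), $\widetilde U=[\tilde u_1,\dots,\tilde u_h]$, $\widetilde U_{k:l}$ its columns $k$ through $l$. $\widetilde{\mathbb{P}}=\widetilde U_{1:r}\widetilde U_{1:r}^\top H^\top\Sigma^{-1}H$, $\widetilde{\mathbb{Q}}=\widetilde U_{r+1:h}\widetilde U_{r+1:h}^\top H^\top\Sigma^{-1}H$, $\widetilde{\mathbb{N}}=I-\widetilde{\mathbb{P}}-\widetilde{\mathbb{Q}}$. *)

From HB Require Import structures.
From mathcomp Require Import all_boot all_order all_algebra.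
From mathcomp Require Import boolp classical_sets.
Set Implicit Arguments. Unset Strict Implicit. Unset Printing Implicit Defensive.
Import Order.TTheory GRing.Theory Num.Theory.
Local Open Scope ring_scope.

Section Defs.
Variable R : realFieldType.

Definition spd n (S : 'M[R]_n) : Prop :=
  S^T = S /\ forall x : 'cV[R]_n, x != 0 -> 0 < (x^T *m S *m x) 0 0.

Definition penrose m n (A : 'M[R]_(m, n)) (X : 'M[R]_(n, m)) : Prop :=
  [/\ A *m X *m A = A, X *m A *m X = X, (A *m X)^T = A *m X & (X *m A)^T = X *m A].

Definition mpinv m n (A : 'M[R]_(m, n)) : 'M[R]_(n, m) :=
  xget 0 (fun X => penrose A X).

Definition ens_mean d J (v : 'I_J -> 'cV[R]_d) : 'cV[R]_d :=
  J%:R^-1 *: \sum_(j < J) v j.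
Definition emp_cov d J (v : 'I_J -> 'cV[R]_d) : 'M[R]_d :=
  (J.-1)%:R^-1 *: \sum_(j < J) (v j - ens_mean v) *m (v j - ens_mean v)^T.

Definition Hplus n d (H : 'M[R]_(n, d)) (S : 'M[R]_n) : 'M[R]_(d, n) :=
  mpinv (H^T *m invmx S *m H) *m H^T *m invmx S.

Definition Mt n d (H : 'M[R]_(n, d)) (S : 'M[R]_n) (G : 'M[R]_d) : 'M[R]_d :=
  invmx (1%:M + G *m H^T *m invmx S *m H).
Fixpoint Gseq n d (H : 'M[R]_(n, d)) (S : 'M[R]_n) (G0 : 'M[R]_d) (i : nat)
  : 'M[R]_d :=
  match i with
  | 0 => G0
  | i'.+1 => Mt H S (Gseq H S G0 i') *m Gseq H S G0 i'
  end.

Definition Cseq n d (H : 'M[R]_(n, d)) (S : 'M[R]_n) (G0 : 'M[R]_d) (i : nat)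
  : 'M[R]_n := H *m Gseq H S G0 i *m H^T.

(* u_l (0-indexed: l < r uses the first formula, r <= l < h the second) *)
Definition util n d (H : 'M[R]_(n, d)) (S : 'M[R]_n) (G0 : 'M[R]_d)
  (r : nat) (w : nat -> 'cV[R]_n) (delta : nat -> nat -> R) (l : nat) : 'cV[R]_d :=
  if (l < r)%N then (delta l 0%N)^-1 *: (G0 *m H^T *m w l)
  else Hplus H S *m S *m w l.

(* Columns k+1 .. l (1-indexed) of the matrix with columns u_1, u_2, ...,
   i.e. 0-indexed columns k .. l-1. *)
Definition colsU d (u : nat -> 'cV[R]_d) (k l : nat) : 'M[R]_(d, l - k) :=
  \matrix_(i < d, j < l - k) u (k + j)%N i 0.

Definition Ptil n d (H : 'M[R]_(n, d)) (S : 'M[R]_n) (G0 : 'M[R]_d)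
  r (w : nat -> 'cV[R]_n) delta : 'M[R]_d :=
  let U := colsU (util H S G0 r w delta) 0 r in U *m U^T *m H^T *m invmx S *m H.
Definition Qtil n d (H : 'M[R]_(n, d)) (S : 'M[R]_n) (G0 : 'M[R]_d)
  r h (w : nat -> 'cV[R]_n) delta : 'M[R]_d :=
  let U := colsU (util H S G0 r w delta) r h in U *m U^T *m H^T *m invmx S *m H.
Definition Ntil n d (H : 'M[R]_(n, d)) (S : 'M[R]_n) (G0 : 'M[R]_d)
  r h (w : nat -> 'cV[R]_n) delta : 'M[R]_d :=
  1%:M - Ptil H S G0 r w delta - Qtil H S G0 r h w delta.

End Defs.

From HB Require Import structures.
From mathcomp Require Import all_boot all_order all_algebra.
From mathcomp Require Import boolp classical_sets.
From mathcomp Require Import zify.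
Import Order.TTheory GRing.Theory Num.Theory.
Local Open Scope ring_scope.

(* Write A = H^T Sigma^-1 H.  The vectors u_l, l < h, are A-orthonormal, so the
   rank-one maps E_l = u_l u_l^T A are pairwise orthogonal idempotents, and
   P and Q are sums of E_l over the disjoint ranges [0, r) and [r, h).  Each u_l
   is an eigenvector of G_0 A for the eigenvalue delta_{l,0}; as A and G_0 are
   symmetric, u_l^T A is then a left eigenvector, so E_l commutes with G_0 A.
   Whatever commutes with G_0 A commutes with every G_i A and with
   M_i = (I + G_i A)^-1, because G_{i+1} A = M_i (G_i A).  The claims about
   N = I - P - Q are then ring identities. *)

Section OrthogonalIdempotents.
Variables (T : pzSemiRingType) (h : nat) (E : nat -> T).
Hypothesis E_orth : forall k l, (k < h)%N -> (l < h)%N ->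
  E k * E l = if k == l then E k else 0.

Lemma mulr_sum_orthogonal (s t : seq nat) :
  all (gtn h) s -> all (gtn h) t -> uniq t ->
  (\sum_(k <- s) E k) * (\sum_(l <- t) E l) = \sum_(k <- s | k \in t) E k.
Proof.
move=> /allP s_h /allP t_h t_uniq; rewrite mulr_suml [RHS]big_mkcond /=.
apply: eq_big_seq => k /s_h k_h; rewrite mulr_sumr.
under eq_big_seq => l /t_h l_h do rewrite E_orth //.
have [k_t | k_t] := boolP (k \in t).
  rewrite (bigD1_seq k) //= eqxx big1 ?addr0 // => l.
  by rewrite eq_sym => /negbTE ->.
by rewrite big1_seq // => l /= l_t; case: eqP => // kl; rewrite kl l_t in k_t.
Qed.

Let index_iota_lt a b : (b <= h)%N -> all (gtn h) (index_iota a b).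
Proof. by move=> b_h; apply/allP => k; rewrite mem_index_iota /=; lia. Qed.

Lemma sum_orthogonal_idem a b : (b <= h)%N ->
  (\sum_(a <= k < b) E k) * (\sum_(a <= k < b) E k) = \sum_(a <= k < b) E k.
Proof.
by move=> b_h; rewrite mulr_sum_orthogonal ?iota_uniq ?index_iota_lt // -big_seq.
Qed.

Lemma sum_orthogonal_disjoint a b c e : (b <= c)%N -> (c <= e)%N -> (e <= h)%N ->
  (\sum_(a <= k < b) E k) * (\sum_(c <= k < e) E k) = 0 /\
  (\sum_(c <= k < e) E k) * (\sum_(a <= k < b) E k) = 0.
Proof.
move=> b_c c_e e_h.
rewrite !mulr_sum_orthogonal ?iota_uniq ?index_iota_lt //; try lia.
split; apply: big1_seq => k /andP[]; rewrite !mem_index_iota; lia.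
Qed.

End OrthogonalIdempotents.
Arguments sum_orthogonal_idem {T h E} E_orth {a b}.
Arguments sum_orthogonal_disjoint {T h E} E_orth {a b c e}.

Lemma idempotent_complement (T : pzRingType) (P Q N M : T) :
  P * P = P -> Q * Q = Q -> P * Q = 0 -> Q * P = 0 ->
  GRing.comm P M -> GRing.comm Q M -> N = 1 - P - Q ->
  [/\ [/\ P * M = M * P, Q * M = M * Q & N * M = M * N],
      [/\ P * P = P, Q * Q = Q & N * N = N],
      [/\ [/\ P * Q = 0, Q * P = 0, P * N = 0 & N * P = 0],
          Q * N = 0 & N * Q = 0]
    & P + Q + N = 1].
Proof.
move=> PP QQ PQ QP PM QM ->.
have PN : P * (1 - P - Q) = 0 by rewrite !mulrBr mulr1 PP PQ !subrr.
have QN : Q * (1 - P - Q) = 0 by rewrite !mulrBr mulr1 QP QQ subr0 subrr.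
have NP : (1 - P - Q) * P = 0 by rewrite !mulrBl mul1r PP QP !subrr.
have NQ : (1 - P - Q) * Q = 0 by rewrite !mulrBl mul1r PQ QQ subr0 subrr.
split=> //.
- by split=> //; rewrite !mulrBl !mulrBr mul1r mulr1 PM QM.
- by split=> //; rewrite {1}mulrBl mulrBl mul1r PN QN !subr0.
- by rewrite -[1 - P - Q]addrA -opprD subrKC.
Qed.

Lemma comm_mx_invmx (R : comUnitRingType) d (X Y : 'M[R]_d) :
  comm_mx X Y -> comm_mx X (invmx Y).
Proof.
move=> XY; have [Yu | /negbTE Ynu] := boolP (Y \in unitmx); last by rewrite /invmx Ynu.
rewrite /comm_mx -[X *m invmx Y]mul1mx -(mulVmx Yu) -!mulmxA; congr (_ *m _).
by rewrite mulmxA -XY -mulmxA mulmxV // mulmx1.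
Qed.

Lemma outer_mx_comm (R : comPzRingType) d (A G : 'M[R]_d) (u : 'cV[R]_d) c :
  A^T = A -> G^T = G -> G *m A *m u = c *: u ->
  comm_mx (u *m u^T *m A) (G *m A).
Proof.
move=> A_sym G_sym Gu.
have Gu' : G *m (A *m u) = c *: u by rewrite mulmxA.
have uAGA : u^T *m (A *m (G *m A)) = c *: (u^T *m A).
  apply: trmx_inj; rewrite linearZ /= !trmx_mul trmxK A_sym G_sym.
  by rewrite -!mulmxA Gu' scalemxAr.
rewrite /comm_mx -!mulmxA uAGA (mulmxA A u) (mulmxA G) Gu'.
by rewrite -scalemxAl -scalemxAr.
Qed.

Lemma outer_mx_orthogonal (R : comPzRingType) d (A : 'M[R]_d) (I : eqType)
    (u : I -> 'cV[R]_d) k l :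
  u k *m (u k)^T *m A *m u l = (k == l)%:R *: u k ->
  (u k *m (u k)^T *m A) *m (u l *m (u l)^T *m A) =
    if k == l then u k *m (u k)^T *m A else 0.
Proof.
move=> uAu; rewrite !mulmxA uAu -!scalemxAl.
by case: eqP => [<-|_]; rewrite ?scale1r ?scale0r ?mul0mx.
Qed.

Lemma spd_unitmx (R : realFieldType) n (S : 'M[R]_n) : spd S -> S \in unitmx.
Proof.
case=> _ S_pos; rewrite -row_free_unit; apply/inj_row_free => x xS0.
apply/eqP; apply: contraT => x_neq0.
by move: (S_pos x^T); rewrite trmx_eq0 trmxK xS0 mul0mx mxE ltxx => /(_ x_neq0).
Qed.

Lemma outer_sum_quad_eq0 (R : realFieldType) d J (a : 'I_J -> 'cV[R]_d)
    (y : 'cV[R]_d) :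
  let G := \sum_(j < J) a j *m (a j)^T in
  y^T *m G *m y = 0 -> G *m y = 0.
Proof.
move=> G yGy0.
have yGy : (y^T *m G *m y) 0 0 = \sum_(j < J) ((a j)^T *m y) 0 0 ^+ 2.
  rewrite /G mulmx_sumr mulmx_suml summxE; apply: eq_bigr => j _.
  have -> : y^T *m (a j *m (a j)^T) *m y = ((a j)^T *m y)^T *m ((a j)^T *m y).
    by rewrite trmx_mul trmxK !mulmxA.
  by rewrite mxE big_ord1 !mxE expr2.
have sum_sq0 : \sum_(j < J) ((a j)^T *m y) 0 0 ^+ 2 = 0 by rewrite -yGy yGy0 mxE.
have aTy0 j : (a j)^T *m y = 0.
  have /eqP := psumr_eq0P (fun k _ => sqr_ge0 (((a k)^T *m y) 0 0)) sum_sq0 (i := j) isT.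
  by rewrite sqrf_eq0 => /eqP aTy00; rewrite [LHS]mx11_scalar aTy00 raddf0.
by rewrite /G mulmx_suml big1 // => j _; rewrite -mulmxA aTy0 mulmx0.
Qed.

Lemma emp_cov_sym {R : realFieldType} {d J} (v : 'I_J -> 'cV[R]_d) :
  (emp_cov v)^T = emp_cov v.
Proof.
rewrite /emp_cov linearZ /= linear_sum /=; congr (_ *: _).
by apply: eq_bigr => j _; rewrite trmx_mul trmxK.
Qed.

Lemma emp_cov_quad_eq0 {R : realFieldType} {d J} (v : 'I_J -> 'cV[R]_d)
    (y : 'cV[R]_d) :
  y^T *m emp_cov v *m y = 0 -> emp_cov v *m y = 0.
Proof.
rewrite /emp_cov -scalemxAr -scalemxAl => /eqP; rewrite scaler_eq0.
case/orP=> [/eqP-> | /eqP/outer_sum_quad_eq0]; first by rewrite scale0r mul0mx.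
by rewrite -scalemxAl => ->; rewrite scaler0.
Qed.

Lemma colsU_mul_trmx (R : realFieldType) d (u : nat -> 'cV[R]_d) k l :
  colsU u k l *m (colsU u k l)^T = \sum_(k <= j < l) u j *m (u j)^T.
Proof.
rewrite -[in RHS](add0n k) big_addn big_mkord; apply/matrixP => a b; rewrite !mxE summxE.
by apply: eq_bigr => j _; rewrite !mxE big_ord1 !mxE addnC.
Qed.

Section Iteration.
Variables (R : realFieldType) (n d : nat) (H : 'M[R]_(n, d)) (Sigma : 'M[R]_n).
Local Notation A := (H^T *m invmx Sigma *m H).

Lemma comm_mx_Mt (X G : 'M[R]_d) : comm_mx X (G *m A) -> comm_mx X (Mt H Sigma G).
Proof.
move=> XGA; rewrite /Mt -!mulmxA (mulmxA H^T).
by apply/comm_mx_invmx/comm_mxD; first exact: comm_mx1.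
Qed.

Lemma comm_mx_Gseq (X G0 : 'M[R]_d) i :
  comm_mx X (G0 *m A) -> comm_mx X (Gseq H Sigma G0 i *m A).
Proof.
move=> XG0A; elim: i => [|i IHi] //=.
by rewrite -mulmxA; apply: comm_mxM => //; apply: comm_mx_Mt.
Qed.

End Iteration.

Section EnsembleProjectors.
Variables (R : realFieldType) (n d h r : nat) (H : 'M[R]_(n, d)) (Sigma : 'M[R]_n).
Variables (G0 : 'M[R]_d) (w : nat -> 'cV[R]_n) (delta : nat -> nat -> R).
Hypothesis Sigma_spd : spd Sigma.
Hypothesis G0_sym : G0^T = G0.
Hypothesis G0_quad_eq0 : forall y : 'cV[R]_d, y^T *m G0 *m y = 0 -> G0 *m y = 0.
Hypothesis r_le_h : (r <= h)%N.
Hypothesis w_orthonormal : forall k l, (k < h)%N -> (l < h)%N ->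
  (w k)^T *m Sigma *m w l = (k == l)%:R%:M.
Hypothesis w_eigen : forall l, (l < h)%N ->
  H *m G0 *m H^T *m w l = delta l 0 *: (Sigma *m w l).
Hypothesis w_range : forall l, (l < h)%N -> exists x, w l = invmx Sigma *m H *m x.
Hypothesis delta_gt0 : forall l, (l < r)%N -> 0 < delta l 0.
Hypothesis delta_eq0 : forall l, (r <= l)%N -> (l < h)%N -> delta l 0 = 0.

Local Notation A := (H^T *m invmx Sigma *m H).
Local Notation u := (util H Sigma G0 r w delta).

Let Sigma_unit : Sigma \in unitmx. Proof. exact: spd_unitmx. Qed.

Let A_sym : A^T = A.
Proof.
have [Sigma_sym _] := Sigma_spd.
by rewrite !trmx_mul trmxK trmx_inv Sigma_sym mulmxA.
Qed.

Lemma H_util l : (l < r)%N -> H *m u l = Sigma *m w l.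
Proof.
move=> l_r; have d_neq0 := lt0r_neq0 (delta_gt0 _ l_r).
rewrite /util l_r -scalemxAr !mulmxA w_eigen; last by lia.
by rewrite scalerA mulVf ?scale1r.
Qed.

Lemma A_util_lt l : (l < r)%N -> A *m u l = H^T *m w l.
Proof. by move=> l_r; rewrite -!mulmxA H_util // (mulmxA _ Sigma) mulVmx ?mul1mx. Qed.

Lemma G0_HTw_eq0 l : (r <= l)%N -> (l < h)%N -> G0 *m (H^T *m w l) = 0.
Proof.
move=> r_l l_h; apply: G0_quad_eq0.
rewrite trmx_mul trmxK -!mulmxA (mulmxA H) (mulmxA _ H^T) w_eigen //.
by rewrite delta_eq0 ?scale0r ?mulmx0.
Qed.

Lemma util_ge l : (r <= l)%N -> u l = mpinv A *m (H^T *m w l).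
Proof.
move=> r_l; rewrite /util ltnNge r_l /Hplus.
by rewrite -!mulmxA (mulmxA _ Sigma) mulVmx ?mul1mx.
Qed.

Section Penrose.
Hypothesis A_penrose : penrose A (mpinv A).

Lemma A_util l : (l < h)%N -> A *m u l = H^T *m w l.
Proof.
move=> l_h; have [l_r | r_l] := ltnP l r; first exact: A_util_lt.
have [x wl] := w_range l l_h; have [AXA _ _ _] := A_penrose.
have HTwl : H^T *m w l = A *m x by rewrite wl !mulmxA.
by rewrite util_ge // HTwl (mulmxA (mpinv A)) (mulmxA A (_ *m A)) (mulmxA A) AXA.
Qed.

Lemma util_gram k l : (k < h)%N -> (l < h)%N ->
  (u k)^T *m A *m u l = (k == l)%:R%:M.
Proof.
move=> k_h l_h; have [Sigma_sym _] := Sigma_spd; have [x wk] := w_range k k_h.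
have Hx : H *m x = Sigma *m w k by rewrite wk !mulmxA mulmxV // mul1mx.
have uA : (u k)^T *m A = x^T *m A.
  have HTwk : H^T *m w k = A *m x by rewrite wk !mulmxA.
  by rewrite -[in LHS]A_sym -trmx_mul (A_util k k_h) HTwk trmx_mul A_sym.
rewrite uA -(mulmxA x^T A) A_util // mulmxA -trmx_mul Hx trmx_mul Sigma_sym.
exact: w_orthonormal.
Qed.

End Penrose.

Lemma util_gram_lt k l : (k < r)%N -> (l < r)%N ->
  (u k)^T *m A *m u l = (k == l)%:R%:M.
Proof.
move=> k_r l_r; have [Sigma_sym _] := Sigma_spd.
rewrite -(mulmxA _ A) A_util_lt // mulmxA -trmx_mul H_util // trmx_mul Sigma_sym.
apply: w_orthonormal; lia.
Qed.

(* mpinv is defined by choice, and is 0 should no Penrose solution exist; we do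
   not need to prove that one always does. *)
Lemma util_ge_eq0 l : ~ penrose A (mpinv A) -> (r <= l)%N -> u l = 0.
Proof.
move=> no_penrose r_l; rewrite util_ge // /mpinv.
by move: no_penrose; rewrite /mpinv; case: xgetP => [X _ _ [] | _ _] //; rewrite mul0mx.
Qed.

Lemma util_orthonormal k l : (k < h)%N -> (l < h)%N ->
  u k *m (u k)^T *m A *m u l = (k == l)%:R *: u k.
Proof.
move=> k_h l_h.
have -> : u k *m (u k)^T *m A *m u l = u k *m ((u k)^T *m A *m u l).
  by rewrite !mulmxA.
have [A_penrose | /util_ge_eq0 u_ge] := pselect (penrose A (mpinv A)).
  by rewrite util_gram // mul_mx_scalar.
have [k_r | r_k] := ltnP k r; last by rewrite u_ge // mul0mx scaler0.
have [l_r | r_l] := ltnP l r; first by rewrite util_gram_lt // mul_mx_scalar.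
by rewrite (u_ge l r_l) !mulmx0 (_ : k == l = false) ?scale0r //; apply/negbTE; lia.
Qed.

Lemma G0A_util l : (l < h)%N -> G0 *m A *m u l = delta l 0 *: u l.
Proof.
move=> l_h; have [l_r | r_l] := ltnP l r.
  have d_neq0 := lt0r_neq0 (delta_gt0 _ l_r).
  rewrite -mulmxA A_util_lt // /util l_r scalerA mulfV // scale1r.
  by rewrite !mulmxA.
rewrite delta_eq0 // scale0r.
have [A_penrose | /util_ge_eq0 -> //] := pselect (penrose A (mpinv A)).
  by rewrite -mulmxA A_util // G0_HTw_eq0.
by rewrite mulmx0.
Qed.

Local Notation E l := (u l *m (u l)^T *m A).

Lemma Ptil_sum : Ptil H Sigma G0 r w delta = \sum_(0 <= l < r) E l.
Proof.
by rewrite /Ptil colsU_mul_trmx !mulmx_suml; apply: eq_bigr => l _; rewrite !mulmxA.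
Qed.

Lemma Qtil_sum : Qtil H Sigma G0 r h w delta = \sum_(r <= l < h) E l.
Proof.
by rewrite /Qtil colsU_mul_trmx !mulmx_suml; apply: eq_bigr => l _; rewrite !mulmxA.
Qed.

Let E_orth k l : (k < h)%N -> (l < h)%N -> E k *m E l = if k == l then E k else 0.
Proof. by move=> k_h l_h; apply: outer_mx_orthogonal; apply: util_orthonormal. Qed.

Lemma Ptil_Qtil_orthogonal_idempotents :
  let P := Ptil H Sigma G0 r w delta in let Q := Qtil H Sigma G0 r h w delta in
  [/\ P *m P = P, Q *m Q = Q, P *m Q = 0 & Q *m P = 0].
Proof.
rewrite /= Ptil_sum Qtil_sum.
have [PQ QP] := sum_orthogonal_disjoint E_orth (a := 0) (leqnn r) r_le_h (leqnn h).
split=> //.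
- exact: (sum_orthogonal_idem E_orth (a := 0) r_le_h).
- exact: (sum_orthogonal_idem E_orth (a := r) (leqnn h)).
Qed.

Lemma Ptil_Qtil_comm :
  comm_mx (Ptil H Sigma G0 r w delta) (G0 *m A) /\
  comm_mx (Qtil H Sigma G0 r h w delta) (G0 *m A).
Proof.
have E_comm l : (l < h)%N -> comm_mx (E l) (G0 *m A).
  by move=> l_h; apply: outer_mx_comm => //; apply: G0A_util.
rewrite Ptil_sum Qtil_sum !big_seq.
by split; apply/comm_mx_sym/comm_mx_sum => l; rewrite mem_index_iota => /andP[_ l_lt];
  apply/comm_mx_sym/E_comm; lia.
Qed.

End EnsembleProjectors.
Arguments Ptil_Qtil_orthogonal_idempotents {R n d h r H Sigma G0 w delta}.
Arguments Ptil_Qtil_comm {R n d h r H Sigma G0 w delta}.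

Theorem proposition4p10 (R : realFieldType) (n d h J : nat)
  (H : 'M[R]_(n, d)) (Sigma : 'M[R]_n) (v : 'I_J -> 'cV[R]_d)
  (r : nat) (w : nat -> 'cV[R]_n) (delta : nat -> nat -> R) :
  \rank H = h ->
  spd Sigma ->
  (r <= h)%N -> (h <= n)%N ->
  (* w_0..w_{n-1}: Sigma-orthonormal *)
  (forall k l, (k < n)%N -> (l < n)%N ->
     (w k)^T *m Sigma *m w l = (k == l)%:R%:M) ->
  (* each w_l is a generalized eigenvector of (C_i, Sigma) with eigenvalue delta l i *)
  (forall l i, (l < n)%N ->
     Cseq H Sigma (emp_cov v) i *m w l = delta l i *: (Sigma *m w l)) ->
  (* w_l, l < h, lie in Ran(Sigma^-1 H) *)
  (forall l, (l < h)%N -> exists x : 'cV[R]_d, w l = invmx Sigma *m H *m x) ->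
  (* w_l, l < r, have positive eigenvalues *)
  (forall l i, (l < r)%N -> 0 < delta l i) ->
  (* w_l, r <= l < h, have eigenvalue zero *)
  (forall l i, (r <= l)%N -> (l < h)%N -> delta l i = 0) ->
  (* w_l, h <= l < n, lie in Ker(H^T) *)
  (forall l, (h <= l)%N -> (l < n)%N -> H^T *m w l = 0) ->
  let G0 := emp_cov v in
  let P := Ptil H Sigma G0 r w delta in
  let Q := Qtil H Sigma G0 r h w delta in
  let N := Ntil H Sigma G0 r h w delta in
  forall i : nat,
    let M := Mt H Sigma (Gseq H Sigma G0 i) in
    [/\ [/\ P *m M = M *m P, Q *m M = M *m Q & N *m M = M *m N],
        [/\ P *m P = P, Q *m Q = Q & N *m N = N],
        [/\ [/\ P *m Q = 0, Q *m P = 0, P *m N = 0 & N *m P = 0],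
            Q *m N = 0 & N *m Q = 0]
      & P + Q + N = 1%:M].
Proof.
move=> _ Sigma_spd r_le_h h_le_n w_orth w_eigen w_range delta_gt0 delta_eq0 _
  G0 P Q N i M.
have w_orth_h k l : (k < h)%N -> (l < h)%N -> (w k)^T *m Sigma *m w l = (k == l)%:R%:M.
  by move=> k_h l_h; apply: w_orth; lia.
have w_eigen0 l : (l < h)%N -> H *m G0 *m H^T *m w l = delta l 0 *: (Sigma *m w l).
  by move=> l_h; apply: (w_eigen l 0); lia.
have [PP QQ PQ QP] := Ptil_Qtil_orthogonal_idempotents Sigma_spd r_le_h w_orth_h
  w_eigen0 w_range (delta_gt0^~ 0).
have [PB QB] := Ptil_Qtil_comm Sigma_spd (emp_cov_sym v) (emp_cov_quad_eq0 v)
  r_le_h w_eigen0 w_range (delta_gt0^~ 0) (delta_eq0^~ 0).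
by apply: idempotent_complement => //; apply/comm_mx_Mt/comm_mx_Gseq.
Qed.
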